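(* Let $\tau\in(0,1]$ and suppose $k\,\alpha^{(2-\tau)d}\ge 2$. Let $u,v\in V$ be distinct with $|\Gamma(u)\cap\Gamma(v)|\ge\tau d$. Then, under the Fast-Filter model described in the context, with probability at least $1/2$ there exists $i\in[k]$ with $u\in S_i$ and $v\in S_i$.
   Context: Let $G=(U,V,E)$ be a bipartite graph with $|U|=M$ and $|V|=N$. For $v\in V$ let $\Gamma(v)\subseteq U$ be its set of neighbours, and assume $|\Gamma(v)|=d\ge 1$ for every $v\in V$. Let $k=2^{m}$ and $\alpha=2^{-r}$, where $m,r$ are positive integers. Identify $[k]=\{1,\dots,k\}$ bijectively with the vector space $\mathrm{GF}(2)^m$ (for instance via the binary representation of $i-1$). Fast-Filter model: for each $u\in U$, independently draw a uniformly random matrix $A'_u\in\mathrm{GF}(2)^{r\times m}$ and a uniformly random vector $b'_u\in\mathrm{GF}(2)^{r}$; all of these are mutually independent. For $v\in V$, let $A^v$ be the $(dr)\times m$ matrix obtained by stacking the matrices $A'_u$, $u\in\Gamma(v)$, in a fixed order, and let $b^v\in\mathrm{GF}(2)^{dr}$ be obtained by stacking the $b'_u$, $u\in\Gamma(v)$, in the same order. For $i\in[k]$ (viewed as a vector in $\mathrm{GF}(2)^m$), the survival set is $S_i=\{v\in V: A^v i+b^v=0\}$, with arithmetic over $\mathrm{GF}(2)$. *)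

From Stdlib Require Import Reals.
From HB Require Import structures.
From mathcomp Require Import all_boot all_algebra.
Set Implicit Arguments. Unset Strict Implicit. Unset Printing Implicit Defensive.

(* An outcome of the Fast-Filter randomness: for each u in U, a matrix
   A'_u in GF(2)^{r x m} and a vector b'_u in GF(2)^r.  The uniform,
   independent draw is the uniform distribution on this finite type. *)
Definition outcome (U : finType) (r m : nat) : finType :=
  {ffun U -> 'M['F_2]_(r, m) * 'cV['F_2]_r}.

(* x in S_i : A^x i + b^x = 0, where A^x, b^x stack the blocks A'_y, b'_y
   for y in Gam x; the stacked system vanishes iff every block vanishes. *)
Definition survives (U V : finType) (Gam : V -> {set U}) (r m : nat)
  (w : outcome U r m) (i : 'cV['F_2]_m) (x : V) : bool :=
  [forall y in Gam x, (((w y).1 *m i + (w y).2) == 0)%R].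

(* The event: some i in [k] = GF(2)^m with u in S_i and v in S_i. *)
Definition collide (U V : finType) (Gam : V -> {set U}) (r m : nat) (u v : V)
  : {set outcome U r m} :=
  [set w : outcome U r m | [exists i : 'cV['F_2]_m,
      survives Gam w i u && survives Gam w i v]].

Definition prob (T : finType) (E : {set T}) : R :=
  Rdiv (INR #|E|) (INR #|T|).

(* For each y, the block (A'_y, b'_y) solves A'_y i + b'_y = 0 for a
   fraction 2^-r of the blocks, and for i <> j it solves both equations for a
   fraction 2^-2r, because A'_y (i - j) is uniformly distributed. Hence with
   S = Gam u :|: Gam v, |S| = D <= (2 - tau) d and M = 2^(rD), the number X of
   i with u, v in S_i satisfies E[X] = k/M and E[X^2] <= k/M + (k/M)^2.
   Summing (k - M X)^2 >= 0 over the outcomes with X > 0 (second-moment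
   method) yields P(X > 0) >= 1 - M/k, and since D <= (2 - tau) d the hypothesis
   forces k >= 2M. *)

From Stdlib Require Import Reals Lra.
From mathcomp Require Import all_boot all_algebra zify.
Set Implicit Arguments. Unset Strict Implicit. Unset Printing Implicit Defensive.
Import GRing.Theory.

Lemma card_cV (F : finType) n : #|{: 'cV[F]_n}| = #|F| ^ n.
Proof. by rewrite card_mx muln1. Qed.

Section AffineBlocks.
Variables (F : finFieldType) (r m : nat).

Lemma card_mulmx_eq (x : 'cV[F]_m) (c : 'cV[F]_r) : x != 0%R ->
  #|[set A : 'M[F]_(r, m) | (A *m x == c)%R]| =
  #|[set A : 'M[F]_(r, m) | (A *m x == 0)%R]|.
Proof.
move=> nz_x.
have [t xt_neq0] : exists t, x t ord0 != 0%R.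
  apply/existsP; apply: contraR nz_x => /existsPn x0.
  by apply/eqP/matrixP => a b; rewrite ord1 mxE; apply/eqP/negPn/x0.
pose A0 := ((x t ord0)^-1 *: (c *m delta_mx 0 t))%R.
have A0x : (A0 *m x = c)%R.
  have rowx : row t x = ((x t ord0)%:M)%R.
    by apply/matrixP => a b; rewrite !ord1 !mxE.
  by rewrite -scalemxAl -mulmxA -rowE rowx mul_mx_scalar scalerA mulVf ?scale1r.
symmetry; rewrite -(card_imset _ (@addIr _ A0)); apply: eq_card => A.
apply/imsetP/idP => [[B] | ].
  by rewrite !inE => /eqP Bx ->; rewrite mulmxDl Bx A0x add0r.
rewrite inE => /eqP Ac; exists (A - A0)%R; last by rewrite subrK.
by rewrite inE mulmxBl Ac A0x subrr.
Qed.

Lemma card_mulmx_eq0 (x : 'cV[F]_m) : x != 0%R ->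
  #|[set A : 'M[F]_(r, m) | (A *m x == 0)%R]| * #|F| ^ r = #|F| ^ (r * m).
Proof.
move=> nz_x; rewrite -(card_mx F r m) -[RHS]sum1_card.
rewrite (partition_big (fun A => (A *m x)%R) xpredT) //=.
rewrite -card_cV mulnC -sum_nat_const.
by apply: eq_bigr => c _; rewrite sum1dep_card (card_mulmx_eq c nz_x).
Qed.

Definition affine_zero (i : 'cV[F]_m) (p : 'M[F]_(r, m) * 'cV[F]_r) : bool :=
  (p.1 *m i + p.2 == 0)%R.

Lemma affine_zeroE i p : affine_zero i p = (p.2 == - (p.1 *m i))%R.
Proof. by rewrite /affine_zero addrC addr_eq0. Qed.

Lemma card_affine_zero i :
  #|[set p | affine_zero i p]| = #|F| ^ (r * m).
Proof.
have inj : injective (fun A : 'M[F]_(r, m) => (A, - (A *m i))%R) by move=> A B [].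
rewrite -card_mx -cardsT -(card_imset _ inj); apply: eq_card => -[A b].
rewrite !inE affine_zeroE /=; apply/eqP/imsetP => [-> | [B _ [-> ->]]] //.
by exists A.
Qed.

Lemma card_affine_zero2 i j : i != j ->
  #|[set p | affine_zero i p && affine_zero j p]| * #|F| ^ r = #|F| ^ (r * m).
Proof.
rewrite -subr_eq0 => /card_mulmx_eq0 <-; congr (_ * _).
have inj : injective (fun A : 'M[F]_(r, m) => (A, - (A *m i))%R) by move=> A B [].
rewrite -(card_imset _ inj); apply: eq_card => -[A b].
rewrite !inE !affine_zeroE /=.
apply/andP/imsetP => [[/eqP -> /eqP e] | [B]].
  by exists A => //; rewrite inE mulmxBr subr_eq0 -eqr_opp -e.
by rewrite inE mulmxBr subr_eq0 => /eqP e [-> ->]; rewrite e.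
Qed.

End AffineBlocks.

Lemma card_ffun_onS (U T : finType) (S : {set U}) (A : {set T}) :
  #|[set w : {ffun U -> T} | [forall y in S, w y \in A]]| =
  #|A| ^ #|S| * #|T| ^ #|~: S|.
Proof.
pose B y : pred T := if y \in S then [pred t | t \in A] else predT.
have -> : #|[set w : {ffun U -> T} | [forall y in S, w y \in A]]| =
    #|(family B : simpl_pred {ffun U -> T})|.
  apply: eq_card => w; rewrite inE unfold_in /=.
  apply: eq_forallb => y; rewrite /B; case: (y \in S) => //=.
rewrite card_family foldrE big_map big_enum (bigID (mem S)) /=.
rewrite -!prod_nat_const; congr (_ * _).
  by apply: eq_bigr => y yS; rewrite /B yS.
rewrite [RHS](eq_bigl (fun y => y \notin S)) => [|y]; last by rewrite inE.
by apply: eq_bigr => y /negbTE yS; rewrite /B yS; apply: eq_card.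
Qed.

Lemma sum_card_exchange (I J : finType) (P : I -> J -> bool) :
  \sum_i #|[set j | P i j]| = \sum_j #|[set i | P i j]|.
Proof.
under eq_bigr do rewrite -sum1dep_card big_mkcond.
rewrite exchange_big; apply: eq_bigr => j _.
by rewrite -sum1dep_card [RHS]big_mkcond.
Qed.

Lemma sum_second_moment (T : finType) (X : T -> nat) (a b : nat) :
  2 * (a * b * \sum_w X w) <=
  a ^ 2 * #|[set w | 0 < X w]| + b ^ 2 * \sum_w X w ^ 2.
Proof.
rewrite -sum1dep_card !big_distrr /= [X in _ <= X + _]big_mkcond -big_split /=.
apply: leq_sum => w _; case: (posnP (X w)) => [-> | Xpos]; first by rewrite !muln0.
rewrite muln1 -expnMn -mulnA; exact: (nat_Cauchy a (b * X w)).1.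
Qed.

Lemma moments_bound (N Z S1 S2 k M : nat) : 0 < k -> 2 * M <= k ->
  M * S1 = k * N -> M * M * S2 <= k * M * N + k * k * N ->
  2 * (k * M * S1) <= k ^ 2 * Z + M ^ 2 * S2 -> N <= 2 * Z.
Proof.
move=> k_gt0 kM S1E S2le moment.
have : k * (k * N) <= k * (k * Z + M * N) by nia.
by rewrite leq_pmul2l //; nia.
Qed.

Section FastFilter.
Variables (F : finFieldType) (U : finType) (r m : nat) (S : {set U}).

Local Notation block := ('M[F]_(r, m) * 'cV[F]_r)%type.
Local Notation q := #|F|.
Local Notation M := (q ^ (r * #|S|)).
Local Notation N := #|{: {ffun U -> block}}|.

Definition survives_on (w : {ffun U -> block}) (i : 'cV[F]_m) : bool :=
  [forall y in S, affine_zero i (w y)].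

Lemma card_block : #|{: block}| = q ^ (r * m) * q ^ r.
Proof. by rewrite card_prod !card_mx muln1. Qed.

Lemma card_survives_on_pair i j :
  #|[set w | survives_on w i && survives_on w j]| =
  #|[set p : block | affine_zero i p && affine_zero j p]| ^ #|S| *
  #|{: block}| ^ #|~: S|.
Proof.
rewrite -card_ffun_onS; apply: eq_card => w; rewrite !inE.
apply/andP/forallP => [[/forallP hi /forallP hj] y | h].
  by apply/implyP => yS; rewrite inE (implyP (hi y) yS) (implyP (hj y) yS).
by split; apply/forallP => y; apply/implyP => yS; have := implyP (h y) yS;
  rewrite inE => /andP[].
Qed.

Lemma card_survives_on_diag i :
  #|[set w | survives_on w i]| = #|[set w | survives_on w i && survives_on w i]|.
Proof. by apply: eq_card => w; rewrite !inE andbb. Qed.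

Lemma card_survives_on i : M * #|[set w | survives_on w i]| = N.
Proof.
rewrite card_survives_on_diag card_survives_on_pair card_ffun.
rewrite -(cardsC S) expnD mulnA; congr (_ * _).
rewrite expnM -expnMn card_block [q ^ r * _]mulnC; congr ((_ * _) ^ _).
by rewrite -(card_affine_zero r i); apply: eq_card => p; rewrite !inE andbb.
Qed.

Lemma card_survives_on_neq i j : i != j ->
  M * #|[set w | survives_on w i && survives_on w j]| =
  #|[set w | survives_on w i]|.
Proof.
move=> neq_ij; rewrite card_survives_on_diag !card_survives_on_pair.
rewrite mulnA expnM -expnMn [#|F| ^ r * _]mulnC card_affine_zero2 //; congr (_ ^ _ * _).
by rewrite -(card_affine_zero r i); apply: eq_card => p; rewrite !inE andbb.
Qed.

Definition survivors (w : {ffun U -> block}) := [set i | survives_on w i].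

Lemma sum_card_survivors :
  M * \sum_w #|survivors w| = q ^ m * N.
Proof.
rewrite sum_card_exchange big_distrr /=.
under eq_bigr do rewrite card_survives_on.
by rewrite sum_nat_const card_cV.
Qed.

Lemma sum_card_survivors_sqr :
  M * M * \sum_w #|survivors w| ^ 2 <= q ^ m * M * N + q ^ m * q ^ m * N.
Proof.
have -> : \sum_w #|survivors w| ^ 2 =
    \sum_i \sum_j #|[set w | survives_on w i && survives_on w j]|.
  under eq_bigr do rewrite -mulnn -cardsX.
  rewrite pair_big /= -(sum_card_exchange (fun w ij => survives_on w ij.1 && survives_on w ij.2)).
  by apply: eq_bigr => w _; apply: eq_card => -[i j]; rewrite !inE.
have -> : q ^ m * M * N + q ^ m * q ^ m * N = \sum_(i : 'cV[F]_m) (M * N + q ^ m * N).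
  by rewrite sum_nat_const card_cV mulnDr !mulnA.
rewrite big_distrr /=.
apply: leq_sum => i _; rewrite big_distrr /= (bigD1 i) //=.
rewrite -card_survives_on_diag -mulnA card_survives_on leq_add2l.
apply: (@leq_trans (\sum_(j | j != i) N)).
  apply: leq_sum => j neq_ji.
  by rewrite -mulnA card_survives_on_neq 1?eq_sym // card_survives_on.
by rewrite sum_nat_const leq_mul2r -card_cV max_card orbT.
Qed.

Lemma card_exists_survivor : 2 * M <= q ^ m ->
  N <= 2 * #|[set w | [exists i, survives_on w i]]|.
Proof.
move=> gap.
have <- : #|[set w | 0 < #|survivors w|]| = #|[set w | [exists i, survives_on w i]]|.
  apply: eq_card => w; rewrite !inE card_gt0 /survivors.
  by apply/set0Pn/existsP => -[i iP]; exists i; move: iP; rewrite inE.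
apply: (moments_bound _ gap sum_card_survivors sum_card_survivors_sqr
  (sum_second_moment _ _ _)).
by rewrite expn_gt0; apply/orP; left; apply/card_gt0P; exists 0%R.
Qed.

End FastFilter.

Lemma survives_setU (U V : finType) (Gam : V -> {set U}) (r m : nat) (u v : V)
  (w : outcome U r m) (i : 'cV['F_2]_m) :
  survives Gam w i u && survives Gam w i v =
  survives_on (Gam u :|: Gam v) w i.
Proof.
apply/andP/forallP => [[/forallP hu /forallP hv] y | h].
  by apply/implyP; rewrite inE => /orP [] yin; [move: (hu y) | move: (hv y)];
    rewrite yin.
by split; apply/forallP => y; apply/implyP => yin; have := h y;
  rewrite inE yin ?orbT.
Qed.

Local Open Scope R_scope.

Lemma INR_expn (n e : nat) : INR (n ^ e)%N = INR n ^ e.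
Proof. by elim: e => [|e IH] //=; rewrite expnS -multE mult_INR IH. Qed.

Lemma Rpower_inv_le_inv_pow (P y : R) (D : nat) :
  1 <= P -> INR D <= y -> Rpower (/ P) y <= / P ^ D.
Proof.
move=> P_ge1 Dy.
have P_gt0 : 0 < P by lra.
rewrite -Rpower_pow // -Rpower_Ropp.
have -> : Rpower (/ P) y = Rpower P (- y).
  by rewrite /Rpower ln_Rinv //; congr exp; ring.
apply: Rle_Rpower => //; lra.
Qed.

Lemma leq_double_expn_of_Rpower (m r D : nat) (y : R) : INR D <= y ->
  INR (2 ^ m) * Rpower (/ INR (2 ^ r)) y >= 2 -> (2 * 2 ^ (r * D) <= 2 ^ m)%N.
Proof.
move=> Dy hk; apply/leP/INR_le; rewrite mult_INR.
have two_r_ge1 : 1 <= INR (2 ^ r) by apply: (le_INR 1); apply/leP; rewrite expn_gt0.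
have pos : 0 < INR (2 ^ (r * D)) by apply: lt_0_INR; apply/ltP; rewrite expn_gt0.
have := Rpower_inv_le_inv_pow two_r_ge1 Dy.
rewrite -INR_expn -expnM => bound.
have : 2 <= INR (2 ^ m) * / INR (2 ^ (r * D)).
  apply: Rle_trans (Rge_le _ _ hk) _; apply: Rmult_le_compat_l bound.
  exact: pos_INR.
move=> /(Rmult_le_compat_r _ _ _ (Rlt_le _ _ pos)).
by rewrite Rmult_assoc Rinv_l ?Rmult_1_r //; lra.
Qed.

Lemma prob_ge_half (T : finType) (E : {set T}) :
  (0 < #|T|)%N -> (#|T| <= 2 * #|E|)%N -> prob E >= / 2.
Proof.
rewrite /prob; move: #|E| #|T| => e t /ltP/lt_0_INR t_gt0 /leP/le_INR.
rewrite mult_INR /= => half; apply: Rle_ge.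
apply: (Rmult_le_reg_r (INR t)) => //.
rewrite /Rdiv Rmult_assoc Rinv_l; lra.
Qed.

Theorem mainTheorem4 (U V : finType) (Gam : V -> {set U}) (d m r : nat)
  (tau : R)
  (hd : (1 <= d)%N) (hm : (0 < m)%N) (hr : (0 < r)%N)
  (hdeg : forall x : V, #|Gam x| = d)
  (htau0 : 0 < tau) (htau1 : tau <= 1)
  (hk : INR (2 ^ m)%N * Rpower (/ INR (2 ^ r)%N) ((2 - tau) * INR d) >= 2)
  (u v : V) (huv : u <> v)
  (hcommon : INR #|Gam u :&: Gam v| >= tau * INR d) :
  prob (collide Gam r m u v) >= / 2.
Proof.
have hD : INR #|Gam u :|: Gam v| <= (2 - tau) * INR d.
  have := f_equal INR (cardsUI (Gam u) (Gam v)).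
  rewrite !hdeg -!plusE !plus_INR; lra.
have gap := leq_double_expn_of_Rpower hD hk.
apply: prob_ge_half; first by apply/card_gt0P; exists [ffun => (0, 0)%R].
have -> : collide Gam r m u v =
    [set w | [exists i, survives_on (Gam u :|: Gam v) w i]].
  by apply/setP => w; rewrite !inE; apply: eq_existsb => i; apply: survives_setU.
by apply: card_exists_survivor; rewrite card_Fp.
Qed.
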